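(* Let $\mathcal{W}$ be an $(\ell-1)$-dimensional vector space over a field of prime characteristic $\ell \ge 5$, and let $A$ be a unipotent linear operator on $\mathcal{W}$ whose Jordan form consists of a single Jordan block of size $\ell-1$. If $r$ is an integer with $2 \le r \le \ell-3$, then $(\wedge^r(A)-1)^{\ell-1} \ne 0$.
   Context: $\wedge^r(A)$ denotes the operator on $\wedge^r(\mathcal{W})$ induced by $A$. *)

From HB Require Import structures.
From mathcomp Require Import all_boot all_order all_algebra.
Set Implicit Arguments. Unset Strict Implicit. Unset Printing Implicit Defensive.
Import GRing.Theory.
Local Open Scope ring_scope.

Definition jordan_block (R : nzRingType) (n : nat) (a : R) : 'M[R]_n :=
  \matrix_(i, j) (a *+ (i == j :> nat) + ((j : nat) == i.+1)%:R).

(* r-element subsets of {0,...,n-1}: they index the standard basis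
   e_{i_1} /\ ... /\ e_{i_r} (i_1 < ... < i_r) of the r-th exterior power. *)
Definition rsubset (n r : nat) := {S : {set 'I_n} | #|S| == r}.

(* the a-th element (in increasing order) of an r-subset *)
Definition subset_ord (n r : nat) (S : rsubset n r) (a : 'I_r) : 'I_n :=
  @enum_val _ (mem (val S)) (cast_ord (esym (eqP (valP S))) a).

(* Matrix of /\^r(A) in the basis indexed by r-subsets: the (I,J) entry is the
   r x r minor of A with rows I and columns J (r-th compound matrix). *)
Definition ext_power (R : comNzRingType) (n r : nat) (A : 'M[R]_n)
  : 'M[R]_#|{: rsubset n r}| :=
  \matrix_(i, j) \det (\matrix_(a < r, b < r)
      A (subset_ord (enum_val i) a) (subset_ord (enum_val j) b)).

(* matrix power, usable for square matrices of any size *)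
Definition mxpow (R : nzRingType) (m : nat) (B : 'M[R]_m) (k : nat) : 'M[R]_m :=
  iter k (mulmx B) 1%:M.

From HB Require Import structures.
From mathcomp Require Import all_boot all_order all_algebra all_fingroup.
From mathcomp Require Import zify.
Set Implicit Arguments.
Unset Strict Implicit.
Unset Printing Implicit Defensive.
Import GRing.Theory.
Local Open Scope ring_scope.

(* In characteristic l, (X - 1)^(l-1) = 1 + X + ... + X^(l-1), so, since
   /\^r is multiplicative, (/\^r A - 1)^(l-1) is the sum of the /\^r (A^k),
   k < l, and it only depends on the similarity class of A.  The unipotent
   Jordan block of size l - 1 is similar to the cyclic shift sigma of the
   coordinates of F^l restricted to the hyperplane of vectors with coordinate
   sum 0: sigma - 1 is nilpotent with the cyclic vector f_1 - f_0.  The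
   powers of sigma are explicit, and for 2 <= r <= l - 3 each sigma^k with
   0 < k < l has a zero row in its minor on the indices {1, ..., r}; hence the
   corresponding diagonal coefficient of the sum above is 1. *)

Lemma sum_nat_delta (R : pzSemiRingType) n (c : nat) (F : nat -> R) :
  \sum_(t < n) (t == c :> nat)%:R * F t = (c < n)%:R * F c.
Proof.
under eq_bigr do rewrite mulr_natl mulrb.
by rewrite -big_mkcond big_ord1_eq mulr_natl mulrb.
Qed.

Lemma sum_nat_delta1 (R : pzSemiRingType) n (c : nat) :
  \sum_(t < n) (t == c :> nat)%:R = (c < n)%:R :> R.
Proof.
rewrite -[RHS]mulr1 -(sum_nat_delta _ _ (fun=> 1)).
by apply: eq_bigr => t _; rewrite mulr1.
Qed.

Lemma sum_mod_shift (V : nmodType) l (i : nat) (g : nat -> V) :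
  \sum_(k < l.+1) g ((i + k) %% l.+1)%N = \sum_(k < l.+1) g k.
Proof.
rewrite [RHS](reindex_inj (addrI (inZp i : 'I_l.+1))) /=.
by apply: eq_bigr => k _; rewrite modnDml.
Qed.

Lemma intertwined_expr_eq0 (R : pzRingType) (u v x y : R) k :
  u * v = 1 -> v * u = 1 -> u * x = y * u -> (x ^+ k == 0) = (y ^+ k == 0).
Proof.
move=> uv vu uxy; have uxk : u * x ^+ k = y ^+ k * u.
  elim: k => [|k IHk]; first by rewrite !expr0 mulr1 mul1r.
  by rewrite exprS mulrA uxy -mulrA IHk mulrA -exprS.
have xE : x ^+ k = v * (y ^+ k * u) by rewrite -uxk mulrA vu mul1r.
have yE : y ^+ k = u * x ^+ k * v by rewrite uxk -mulrA uv mulr1.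
apply/eqP/eqP => [x0 | y0]; first by rewrite yE x0 mulr0 mul0r.
by rewrite xE y0 mul0r mulr0.
Qed.

Lemma natr_mx_eq0 (R : pzRingType) m k : k%:R = 0 :> R -> k%:R = 0 :> 'M[R]_m.
Proof. by move=> k0; rewrite -(rmorph_nat (@scalar_mx R m)) k0 raddf0. Qed.

Lemma mxpowE (R : nzRingType) m (B : 'M[R]_m) k : mxpow B k = B ^+ k.
Proof. by elim: k => //= k ->; rewrite exprS mulmxE. Qed.

Section PrimeCharacteristic.
Variables (R : pzRingType) (p : nat).
Hypotheses (p_prime : prime p) (p_eq0 : p%:R = 0 :> R).

Lemma bin_pred_prime k : (k < p)%N -> 'C(p.-1, k)%:R = (-1) ^+ k :> R.
Proof.
elim: k => [|k IHk] lt_kp; first by rewrite bin0.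
have binS_pred : 'C(p, k.+1) = ('C(p.-1, k.+1) + 'C(p.-1, k))%N.
  by rewrite -{1}(prednK (prime_gt0 p_prime)) binS.
have : 'C(p, k.+1)%:R = 0 :> R.
  have /dvdnP [q ->] : (p %| 'C(p, k.+1))%N by rewrite prime_dvd_bin ?lt_kp.
  by rewrite natrM p_eq0 mulr0.
rewrite binS_pred natrD IHk ?(ltnW lt_kp) // => /eqP.
by rewrite addr_eq0 => /eqP ->; rewrite exprS mulN1r.
Qed.

Lemma expr_sub1_pchar (x : R) : (x - 1) ^+ p.-1 = \sum_(k < p) x ^+ k.
Proof.
rewrite (exprBn_comm _ (commr1 x)) prednK ?prime_gt0 //.
rewrite [RHS](reindex_inj rev_ord_inj); apply: eq_bigr => k _ /=.
rewrite expr1n mulr1 -mulrnAl -mulr_natl bin_pred_prime //.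
by rewrite -exprD -signr_odd addnn odd_double mul1r; congr (_ ^+ _); lia.
Qed.

End PrimeCharacteristic.

Section RSubsets.
Variables n r : nat.
Implicit Types S T : rsubset n r.

Lemma subset_ord_mem S a : subset_ord S a \in val S.
Proof. exact: enum_valP. Qed.

Lemma subset_ord_inj S : injective (subset_ord S).
Proof. by move=> a b /enum_val_inj/cast_ord_inj. Qed.

Lemma subset_ord_rank S x (xS : x \in val S) :
  subset_ord S (cast_ord (eqP (valP S)) (enum_rank_in xS x)) = x.
Proof. by rewrite /subset_ord cast_ordK enum_rankK_in. Qed.

Lemma subset_ord_onto S x : x \in val S -> exists a, subset_ord S a = x.
Proof. by move=> xS; eexists; apply: subset_ord_rank. Qed.

Lemma subset_ord_perm_inj S T (p q : 'S_r) :
  subset_ord S \o p =1 subset_ord T \o q -> S = T /\ p = q.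
Proof.
have sub S' T' (p' q' : 'S_r) :
    subset_ord S' \o p' =1 subset_ord T' \o q' -> val S' \subset val T'.
  move=> e; apply/subsetP => _ /subset_ord_onto [b <-].
  by rewrite -(permKV p' b) [_ (p' _)]e subset_ord_mem.
move=> e; have eST : S = T.
  apply/val_inj/eqP; rewrite eqEcard (sub _ _ _ _ e) /=.
  by rewrite (eqP (valP S)) (eqP (valP T)).
subst T; split=> //; apply/permP => a; exact/subset_ord_inj/e.
Qed.

Lemma injective_subset_ord_perm (f : 'I_r -> 'I_n) : injective f ->
  exists S (p : 'S_r), f =1 subset_ord S \o p.
Proof.
move=> f_inj; have cardS : #|f @: [set: 'I_r]| == r.
  by rewrite card_imset // cardsT card_ord.
pose S : rsubset n r := exist (fun A : {set _} => #|A| == r) _ cardS.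
have fS a : f a \in val S by apply: imset_f; rewrite inE.
pose p0 a := cast_ord (eqP (valP S)) (enum_rank_in (fS a) (f a)).
have p0E a : subset_ord S (p0 a) = f a by apply: subset_ord_rank.
have p0_inj : injective p0 by move=> a b e; apply: f_inj; rewrite -!p0E e.
by exists S, (perm p0_inj) => a /=; rewrite permE p0E.
Qed.

Lemma rsubset_segment : (r < n)%N ->
  exists S, forall x : 'I_n, (x \in val S) = (0 < x <= r)%N.
Proof.
move=> lt_rn; pose f (a : 'I_r) : 'I_n := Ordinal (leq_ltn_trans (ltn_ord a) lt_rn).
have f_inj : injective f by move=> a b [] /val_inj.
have cardS : #|f @: [set: 'I_r]| == r by rewrite card_imset // cardsT card_ord.
exists (exist (fun A : {set _} => #|A| == r) _ cardS) => x /=.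
apply/imsetP/idP => [[a _ ->] | /andP [x_gt0 le_xr]]; first by rewrite /= ltn_ord.
have lt_xr : (x.-1 < r)%N by rewrite prednK.
by exists (Ordinal lt_xr); rewrite ?inE //; apply: val_inj; rewrite /= prednK.
Qed.

End RSubsets.

Section CauchyBinet.
Variables (R : comPzRingType) (n r : nat).

Lemma det_mulmx_expand (X : 'M[R]_(r, n)) (Y : 'M[R]_(n, r)) :
  \det (X *m Y) =
    \sum_(f : {ffun 'I_r -> 'I_n}) (\prod_a X a (f a)) * \det (rowsub f Y).
Proof.
transitivity (\sum_(s : 'S_r) \sum_(f : {ffun 'I_r -> 'I_n})
    (-1) ^+ s * ((\prod_a X a (f a)) * \prod_a Y (f a) (s a))).
  apply: eq_bigr => s _; rewrite -big_distrr /=; congr (_ * _).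
  under eq_bigr do rewrite mxE.
  by rewrite bigA_distr_bigA /=; apply: eq_bigr => f _; rewrite big_split.
rewrite exchange_big /=; apply: eq_bigr => f _.
rewrite big_distrr /=; apply: eq_bigr => s _.
by rewrite mulrCA; congr (_ * (_ * _)); apply: eq_bigr => a _; rewrite mxE.
Qed.

Lemma det_rowsub_perm m (g : 'I_r -> 'I_m) (p : 'S_r) (Y : 'M[R]_(m, r)) :
  \det (rowsub (g \o p) Y) = (-1) ^+ p * \det (rowsub g Y).
Proof. by rewrite rowsub_comp -row_permEsub row_permE det_mulmx det_perm. Qed.

Lemma cauchy_binet (X : 'M[R]_(r, n)) (Y : 'M[R]_(n, r)) :
  \det (X *m Y) = \sum_(S : rsubset n r)
    \det (colsub (subset_ord S) X) * \det (rowsub (subset_ord S) Y).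
Proof.
pose G (f : {ffun 'I_r -> 'I_n}) := (\prod_a X a (f a)) * \det (rowsub f Y).
pose phi (Sp : rsubset n r * 'S_r) := [ffun a => subset_ord Sp.1 (Sp.2 a)].
have phi_inj : injective phi.
  move=> [S p] [T q] /ffunP e.
  have [] := @subset_ord_perm_inj _ _ S T p q; last by move=> -> ->.
  by move=> a; have := e a; rewrite !ffunE.
have im_phi : phi @: predT = [set f : {ffun 'I_r -> 'I_n} | injectiveb f].
  apply/setP => f; rewrite inE; apply/imsetP/injectiveP.
    by move=> [[S p] _ ->] a b; rewrite !ffunE => /subset_ord_inj/perm_inj.
  move=> /injective_subset_ord_perm [S [p e]].
  by exists (S, p); rewrite // /phi; apply/ffunP => a; rewrite ffunE e.
have minorsE S : \det (colsub (subset_ord S) X) * \det (rowsub (subset_ord S) Y)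
    = \sum_(p : 'S_r) G (phi (S, p)).
  rewrite big_distrl /=; apply: eq_bigr => p _.
  rewrite /G (eq_rowsub _ (ffunE _)) det_rowsub_perm mulrA [_ * (-1) ^+ p]mulrC.
  by congr (_ * _ * _); apply: eq_bigr => a _; rewrite ffunE mxE.
rewrite det_mulmx_expand (eq_bigr _ (fun S _ => minorsE S)) pair_big /=.
rewrite -(big_imset G (in2W phi_inj)) /= im_phi [RHS]big_mkcond /=.
apply: eq_bigr => f _; rewrite inE; case: (boolP (injectiveb f)) => //.
move=> /injectivePn [a [b ab fab]]; rewrite /G (determinant_alternate ab) ?mulr0 //.
by move=> c; rewrite !mxE fab.
Qed.

End CauchyBinet.

Section ExteriorPower.
Variables (R : comNzRingType) (n r : nat).
Implicit Types A B : 'M[R]_n.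

Lemma ext_powerE A (I J : rsubset n r) :
  ext_power r A (enum_rank I) (enum_rank J) =
    \det (mxsub (subset_ord I) (subset_ord J) A).
Proof. by rewrite mxE !enum_rankK. Qed.

Lemma ext_power_row_eq0 A (I J : rsubset n r) x :
    x \in val I -> (forall y, y \in val J -> A x y = 0) ->
  ext_power r A (enum_rank I) (enum_rank J) = 0.
Proof.
move=> /subset_ord_onto [a <-] Ax0; rewrite ext_powerE (expand_det_row _ a).
by rewrite big1 // => b _; rewrite mxE Ax0 ?mul0r ?subset_ord_mem.
Qed.

Lemma ext_powerM A B : ext_power r (A *m B) = ext_power r A *m ext_power r B.
Proof.
apply/matrixP => i j; rewrite -[i]enum_valK -[j]enum_valK ext_powerE mxE.
rewrite mxsub_mul cauchy_binet (reindex (@enum_rank _)) /=; last first.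
  exact/onW_bij/enum_rank_bij.
by apply: eq_bigr => S _; rewrite !ext_powerE -!mxsub_comp.
Qed.

Lemma ext_power1 : ext_power r (1 : 'M[R]_n) = 1.
Proof.
apply/matrixP => i j; rewrite -[i]enum_valK -[j]enum_valK.
move: (enum_val i) (enum_val j) => I J {i j}.
rewrite [RHS]mxE (inj_eq enum_rank_inj).
have [<- | neIJ] := eqVneq I J.
  rewrite ext_powerE (_ : mxsub _ _ _ = 1) ?det1 //.
  by apply/matrixP => a b; rewrite !mxE (inj_eq (@subset_ord_inj _ _ _)).
have [x xI xJ] : exists2 x, x \in val I & x \notin val J.
  apply/subsetPn; apply: contra neIJ => sIJ; apply/eqP/val_inj/eqP.
  by rewrite eqEcard sIJ (eqP (valP I)) (eqP (valP J)) leqnn.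
rewrite (ext_power_row_eq0 xI) // => y yJ; rewrite mxE.
by case: eqP yJ xJ => // -> ->.
Qed.

Lemma ext_powerX A k : ext_power r (A ^+ k) = ext_power r A ^+ k.
Proof.
elim: k => [|k IHk]; first by rewrite !expr0 ext_power1.
by rewrite !exprS -mulmxE ext_powerM IHk.
Qed.

End ExteriorPower.

Lemma ext_power_similar_sub1X_eq0 (R : comUnitRingType) n r (U A B : 'M[R]_n) k :
    U \in unitmx -> U *m A = B *m U ->
  ((ext_power r A - 1) ^+ k == 0) = ((ext_power r B - 1) ^+ k == 0).
Proof.
move=> U_unit UAB.
apply: (@intertwined_expr_eq0 _ (ext_power r U) (ext_power r (invmx U))).
- by rewrite -mulmxE -ext_powerM mulmxV // ext_power1.
- by rewrite -mulmxE -ext_powerM mulVmx // ext_power1.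
- by rewrite mulrBr mulrBl mulr1 mul1r -!mulmxE -!ext_powerM UAB.
Qed.

Definition krylov_mx (R : pzRingType) n (D : 'M[R]_n) (v : 'rV[R]_n) : 'M[R]_n :=
  \matrix_(i < n) (v *m D ^+ i).

Lemma krylov_mx_jordan (R : nzRingType) n (C : 'M[R]_n) (v : 'rV[R]_n) :
    v *m (C - 1) ^+ n = 0 ->
  krylov_mx (C - 1) v *m C = jordan_block n 1 *m krylov_mx (C - 1) v.
Proof.
move=> vDn0; apply/matrixP => i j.
pose F t := (v *m (C - 1) ^+ t) 0 j.
have -> : (krylov_mx (C - 1) v *m C) i j = F i.+1 + F i.
  transitivity (row i (krylov_mx (C - 1) v *m C) 0 j); first by rewrite [RHS]mxE.
  rewrite row_mul rowK -{2}(subrK 1 C) mulmxDr mulmx1 -mulmxA mulmxE -exprSr.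
  by rewrite mxE.
rewrite mxE; under eq_bigr => t _ do
  rewrite [krylov_mx _ _ t j]mxE [jordan_block _ _ i t]mxE mulrDl eq_sym.
rewrite big_split /= (sum_nat_delta _ _ F) (sum_nat_delta _ _ F) ltn_ord mul1r.
rewrite addrC; case: ltnP => [_ | le_ni]; first by rewrite mul1r.
have -> : i.+1 = n by apply/eqP; rewrite eqn_leq ltn_ord.
by rewrite /F vDn0 mxE mul0r.
Qed.

Section UnitSuperdiagonal.
Variables (R : pzRingType) (n : nat) (D : 'M[R]_n.+1).
Hypotheses (D_above : forall t j : 'I_n.+1, (t.+1 < j)%N -> D t j = 0)
           (D_superdiag : forall t j : 'I_n.+1, j = t.+1 :> nat -> D t j = 1).

Lemma expr_row0_unit_superdiag i (j : 'I_n.+1) :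
  (i <= j)%N -> (D ^+ i) 0 j = (i == j :> nat)%:R.
Proof.
elim: i j => [|i IHi] j le_ij; first by rewrite expr0 -idmxE mxE.
have lt_in : (i < n.+1)%N by apply: ltn_trans le_ij (ltn_ord j).
rewrite exprSr -mulmxE mxE (bigD1 (Ordinal lt_in)) //= big1 => [|t ne_ti].
  rewrite addr0 IHi // eqxx mul1r.
  move: le_ij; rewrite leq_eqVlt => /predU1P [ij | lt_ij].
    by rewrite D_superdiag ij ?eqxx.
  by rewrite D_above // (ltn_eqF lt_ij).
have [le_it | lt_ti] := leqP i t.
  rewrite IHi // (_ : (i == t :> nat) = false) ?mul0r //.
  by apply: contraNF ne_ti => /eqP it; apply/eqP/val_inj.
by rewrite D_above ?mulr0 // (leq_ltn_trans lt_ti le_ij).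
Qed.

End UnitSuperdiagonal.

Lemma krylov_mx_unit (R : comUnitRingType) n (D : 'M[R]_n.+1) :
    (forall t j : 'I_n.+1, (t.+1 < j)%N -> D t j = 0) ->
    (forall t j : 'I_n.+1, j = t.+1 :> nat -> D t j = 1) ->
  krylov_mx D 'e_0 \in unitmx.
Proof.
move=> D_above D_superdiag.
have KE (i j : 'I_n.+1) : (i <= j)%N -> krylov_mx D 'e_0 i j = (i == j :> nat)%:R.
  by move=> le_ij; rewrite mxE -rowE mxE expr_row0_unit_superdiag.
rewrite unitmxE det_trig; last first.
  apply/is_trig_mxP => i j lt_ij.
  by rewrite KE; [rewrite (ltn_eqF lt_ij) | exact: ltnW].
by rewrite big1 ?unitr1 // => i _; rewrite KE ?eqxx.
Qed.

(* The matrix of the cyclic shift f_j |-> f_(j+1 mod n+1) of R^(n+1), acting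
   on the hyperplane of vectors with coordinate sum 0, in the basis
   e_i = f_(i+1) - f_i (i < n); e_(n-1) is sent to f_0 - f_n, that is to
   minus the sum of all the e_i. *)
Definition cycle_mx (R : pzRingType) n : 'M[R]_n :=
  \matrix_(i, j) ((j == i.+1 :> nat)%:R - (i.+1 == n)%:R).

Section CycleMx.
Variables (R : pzRingType) (n : nat).
Local Notation C := (cycle_mx R n).
Local Notation l := n.+1.

Lemma cycle_mxX k : C ^+ k =
  \matrix_(i, j) ((j == (i + k) %% l :> nat)%N%:R - ((i + k) %% l == n)%N%:R).
Proof.
elim: k => [|k IHk]; apply/matrixP => i j.
  rewrite expr0 -idmxE !mxE addn0 (modn_small (ltn_trans (ltn_ord i) (ltnSn n))).
  by rewrite (ltn_eqF (ltn_ord i)) subr0 eq_sym.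
have n_gt0 : (0 < n)%N by apply: leq_ltn_trans (ltn_ord j).
have colsum : \sum_(t < n) ((j == t.+1 :> nat)%:R - (t.+1 == n)%:R) =
    - (j == 0 :> nat)%:R :> R.
  have last_row (t : 'I_n) : (t.+1 == n) = (t == n.-1 :> nat) by lia.
  under eq_bigr do rewrite last_row.
  rewrite sumrB sum_nat_delta1 prednK // leqnn.
  case: (posnP j) => [-> | j_gt0]; first by rewrite big1 ?sub0r // => t _.
  have shift (t : 'I_n) : (j == t.+1 :> nat) = (t == j.-1 :> nat) by lia.
  under eq_bigr do rewrite shift.
  by rewrite sum_nat_delta1 (leq_ltn_trans (leq_pred j)) // subrr oppr0.
rewrite exprSr -mulmxE IHk !mxE.
under eq_bigr do rewrite !mxE mulrBl.
set s := ((i + k) %% l)%N.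
pose F t := (j == t.+1 :> nat)%:R - (t.+1 == n)%:R : R.
rewrite sumrB (sum_nat_delta _ _ F) -big_distrr /= colsum.
have -> : ((i + k.+1) %% l = s.+1 %% l)%N by rewrite addnS -addn1 -modnDml addn1.
have : (s <= n)%N by rewrite -ltnS ltn_pmod.
rewrite leq_eqVlt => /predU1P [-> | s_lt_n].
  rewrite modnn ltnn eqxx mul0r mul1r sub0r opprK eq_sym.
  by rewrite (ltn_eqF n_gt0) subr0.
by rewrite modn_small // s_lt_n (ltn_eqF s_lt_n) mul1r mul0r subr0.
Qed.

Lemma sum_cycle_mxX : \sum_(k < l) C ^+ k = 0.
Proof.
apply/matrixP => i j; rewrite summxE mxE.
under eq_bigr do rewrite cycle_mxX mxE eq_sym.
rewrite sumrB (sum_mod_shift _ i (fun s => (s == j :> nat)%:R)).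
rewrite (sum_mod_shift _ i (fun s => (s == n)%:R)) !sum_nat_delta1.
by rewrite ltnS ltnW ?ltnSn ?subrr.
Qed.

Lemma cycle_mx_sub1_nilpotent : prime l -> l%:R = 0 :> R -> (C - 1) ^+ n = 0.
Proof.
move=> l_prime l_eq0.
by rewrite (expr_sub1_pchar l_prime (natr_mx_eq0 _ l_eq0)) sum_cycle_mxX.
Qed.

End CycleMx.

Lemma krylov_cycle_mx_jordan (R : nzRingType) n :
    prime n.+2 -> n.+2%:R = 0 :> R ->
  krylov_mx (cycle_mx R n.+1 - 1) 'e_0 *m cycle_mx R n.+1 =
    jordan_block n.+1 1 *m krylov_mx (cycle_mx R n.+1 - 1) 'e_0.
Proof.
move=> l_prime l_eq0; apply: krylov_mx_jordan.
by rewrite cycle_mx_sub1_nilpotent ?mulmx0.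
Qed.

Lemma krylov_cycle_mx_unit (R : comUnitRingType) n :
  krylov_mx (cycle_mx R n.+1 - 1) 'e_0 \in unitmx.
Proof.
apply: krylov_mx_unit => t j; rewrite -idmxE !mxE -val_eqE /=.
  move=> lt_tj; rewrite (gtn_eqF lt_tj) (ltn_eqF (ltn_trans lt_tj (ltn_ord j))).
  by rewrite (ltn_eqF (ltn_trans (ltnSn t) lt_tj)) !subr0.
move=> jE; have lt_tn : (t.+1 < n.+1)%N by rewrite -jE.
by rewrite jE eqxx (ltn_eqF lt_tn) (ltn_eqF (ltnSn t)) !subr0.
Qed.

Lemma ext_power_cycle_mxX_segment (R : comNzRingType) n r k (S : rsubset n r) :
    (2 <= r)%N -> (r.+2 <= n)%N ->
    (forall x : 'I_n, (x \in val S) = (0 < x <= r)%N) -> (0 < k < n.+1)%N ->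
  ext_power r (cycle_mx R n ^+ k) (enum_rank S) (enum_rank S) = 0.
Proof.
move=> r_ge2 r_le S_seg /andP [k_gt0 k_lt].
(* Row i of the minor vanishes when (i + k) mod (n + 1) is neither one of its
   column indices 1..r nor n (which gives a row of -1's, see cycle_mxX). *)
have [i /andP [i_gt0 le_ir] s_out] : exists2 i, (0 < i <= r)%N &
    ((i + k) %% n.+1 == 0)%N || (r < (i + k) %% n.+1 < n)%N.
  case: (ltngtP (r + k) n) => [lt_rk | gt_rk | eq_rk].
  - by exists r; [lia | rewrite modn_small; lia].
  - by exists (n.+1 - k)%N; [lia | rewrite subnK ?modnn; lia].
  - by exists r.-1; [lia | rewrite modn_small; lia].
have lt_in : (i < n)%N by lia.
apply: (ext_power_row_eq0 (x := Ordinal lt_in)); first by rewrite S_seg /= i_gt0.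
move=> y; rewrite S_seg cycle_mxX mxE /=; move: s_out.
move: ((i + k) %% n.+1)%N => s s_out y_seg.
rewrite (_ : (y == s :> nat) = false); last lia.
by rewrite (_ : (s == n) = false) ?subrr //; lia.
Qed.

Lemma ext_power_cycle_mx_sub1X_neq0 (R : comNzRingType) n r :
    prime n.+1 -> n.+1%:R = 0 :> R -> (2 <= r)%N -> (r.+2 <= n)%N ->
  (ext_power r (cycle_mx R n) - 1) ^+ n != 0.
Proof.
move=> l_prime l_eq0 r_ge2 r_le.
rewrite (expr_sub1_pchar l_prime (natr_mx_eq0 _ l_eq0)).
have [|S S_seg] := @rsubset_segment n r; first by apply: ltn_trans r_le.
apply/eqP => /matrixP /(_ (enum_rank S) (enum_rank S)).
rewrite summxE big_ord_recl big1 => [|k _]; last first.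
  by rewrite -ext_powerX ext_power_cycle_mxX_segment // lift0 /= ltnS ltn_ord.
by rewrite /= expr0 mxE eqxx addr0 mxE => /eqP; rewrite oner_eq0.
Qed.

Theorem lemma3p10 (F : fieldType) (l r : nat) (A : 'M[F]_(l.-1)) :
  prime l -> (5 <= l)%N -> l \in [pchar F] ->
  (exists P : 'M[F]_(l.-1),
      P \in unitmx /\ A = invmx P *m jordan_block (l.-1) 1 *m P) ->
  (2 <= r)%N -> (r <= l - 3)%N ->
  mxpow (ext_power r A - 1%:M) (l.-1) != 0.
Proof.
move=> l_prime l_ge5 l_char [P [P_unit ->]] r_ge2 r_le.
have [N lE] : exists N, l = N.+2 by exists l.-2; lia.
subst l; rewrite mxpowE idmxE /=.
have l_eq0 := pcharf0 l_char.
rewrite (ext_power_similar_sub1X_eq0 _ _ P_unit (_ : _ = jordan_block N.+1 1 *m P)).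
  rewrite -(ext_power_similar_sub1X_eq0 _ _ (krylov_cycle_mx_unit _ _)
                                           (krylov_cycle_mx_jordan l_prime l_eq0)).
  by apply: ext_power_cycle_mx_sub1X_neq0 => //; lia.
by rewrite !mulmxA mulmxV ?mul1mx.
Qed.
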